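(* Let $(L,d)$ be a metric locale without isolated points and let $a\in L$ with $a^*=0$. Then there exists $g\in L$ with $g^*\vee g^{**}\le a$.
   Context: A frame (locale) $L$ is a complete lattice in which finite meets distribute over arbitrary joins; $a^*$ denotes the pseudocomplement of $a$. A diameter on $L$ is a map $d\colon L\to[0,+\infty]$ with (D1) $d(0)=0$; (D2) $a\le b\Rightarrow d(a)\le d(b)$; (D3) $a\wedge b\neq 0\Rightarrow d(a\vee b)\le d(a)+d(b)$; (D4) for every $\varepsilon>0$, $\bigvee\{a\in L\mid d(a)<\varepsilon\}=1$. Write $b\lhd_\varepsilon a$ if for every $c\in L$ with $d(c)<\varepsilon$, $c\wedge b\ne0$ implies $c\le a$. The diameter is admissible if $a=\bigvee\{b\in L\mid b\lhd_\varepsilon a \text{ for some }\varepsilon>0\}$ for all $a\in L$; a metric locale is a pair $(L,d)$ with $d$ an admissible diameter. A sublocale of $L$ is a subset closed under arbitrary meets such that $x\to s$ lies in it whenever $s$ does ($\to$ the Heyting implication); the open sublocale of $x$ is $\mathfrak{o}(x)=\{x\to y\mid y\in L\}$. A point of $L$ is $p\ne1$ such that $x\wedge y\le p$ implies $x\le p$ or $y\le p$; it is isolated if the sublocale $\{1,p\}$ equals $\mathfrak{o}(x)$ for some $x\in L$. *)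

From Stdlib Require Import Reals.
From Coquelicot Require Import Rbar.
Open Scope R_scope.

Record Frame := {
  carrier :> Type;
  fle : carrier -> carrier -> Prop;
  fle_refl : forall x, fle x x;
  fle_trans : forall x y z, fle x y -> fle y z -> fle x z;
  fle_antisym : forall x y, fle x y -> fle y x -> x = y;
  fsup : (carrier -> Prop) -> carrier;
  fsup_ub : forall (S : carrier -> Prop) x, S x -> fle x (fsup S);
  fsup_least : forall (S : carrier -> Prop) y,
      (forall x, S x -> fle x y) -> fle (fsup S) y;
  fmeet : carrier -> carrier -> carrier;
  fmeet_glb : forall x y z, fle z (fmeet x y) <-> (fle z x /\ fle z y);
  fmeet_distr : forall a (S : carrier -> Prop),
      fmeet a (fsup S) = fsup (fun c => exists s, S s /\ c = fmeet a s)
}.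

Section FrameOps.
Variable L : Frame.

Definition fbot : L := fsup L (fun _ => False).
Definition ftop : L := fsup L (fun _ => True).
Definition fjoin (x y : L) : L := fsup L (fun z => z = x \/ z = y).
Definition fimp (x y : L) : L := fsup L (fun z => fle L (fmeet L z x) y).
Definition pcompl (a : L) : L := fimp a fbot.

Definition is_point (p : L) : Prop :=
  p <> ftop /\ forall x y, fle L (fmeet L x y) p -> fle L x p \/ fle L y p.

Definition open_sublocale (x : L) (s : L) : Prop := exists y, s = fimp x y.

Definition isolated_point (p : L) : Prop :=
  is_point p /\
  exists x, forall s, (s = ftop \/ s = p) <-> open_sublocale x s.

Definition is_diameter (d : L -> Rbar) : Prop :=
  (forall a, Rbar_le (Finite 0) (d a)) /\
  d fbot = Finite 0 /\
  (forall a b, fle L a b -> Rbar_le (d a) (d b)) /\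
  (forall a b, fmeet L a b <> fbot ->
      Rbar_le (d (fjoin a b)) (Rbar_plus (d a) (d b))) /\
  (forall eps : R, 0 < eps ->
      fsup L (fun a => Rbar_lt (d a) (Finite eps)) = ftop).

Definition eps_below (d : L -> Rbar) (eps : R) (b a : L) : Prop :=
  forall c, Rbar_lt (d c) (Finite eps) -> fmeet L c b <> fbot -> fle L c a.

Definition admissible (d : L -> Rbar) : Prop :=
  forall a, a = fsup L (fun b => exists eps : R, 0 < eps /\ eps_below d eps b a).

Definition metric_locale (d : L -> Rbar) : Prop :=
  is_diameter d /\ admissible d.

End FrameOps.

Arguments fbot {L}.
Arguments ftop {L}.

(* Call W well inside a if, for some r > 0, W has diameter < r and every
   element of diameter < r meeting W lies below a.  As a is dense, every
   nonzero element has a nonzero part well inside a; as there are no isolated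
   points, every nonzero u splits into disjoint nonzero p, q <= u (otherwise u
   would be an atom and u^* an isolated point).  Take a maximal family of
   pairs (p, q) whose joins p ∨ q are pairwise disjoint and well inside a, and
   put g = ⋁ p, h = ⋁ q, so that h <= g^*.  If x is disjoint from g (or h),
   then x <= a: were some b ◁_ε x not below a, some c of diameter < ε/2 would
   meet b with b ∧ c not below a; c meets a member W = p ∨ q of the family,
   whose diameter must then be below that of c, so W ∨ c has diameter < ε,
   meets b, hence lies under x, and x meets p (or q).  Thus g^* <= a and
   g^** <= h^* <= a. *)
From Stdlib Require Import Reals Lra Classical.
From Coquelicot Require Import Rbar.
From mathcomp Require classical_sets.
Open Scope R_scope.

Section FrameFacts.
Variable L : Frame.
Notation le := (fle L).
Notation meet := (fmeet L).

Lemma fmeet_le_l x y : le (meet x y) x.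
Proof. exact (proj1 (proj1 (fmeet_glb L x y (meet x y)) (fle_refl L _))). Qed.

Lemma fmeet_le_r x y : le (meet x y) y.
Proof. exact (proj2 (proj1 (fmeet_glb L x y (meet x y)) (fle_refl L _))). Qed.

Lemma fmeet_greatest x y z : le z x -> le z y -> le z (meet x y).
Proof. intros Hx Hy. apply fmeet_glb. split; assumption. Qed.

Lemma fmeet_comm x y : meet x y = meet y x.
Proof.
  apply fle_antisym; apply fmeet_greatest; apply fmeet_le_r || apply fmeet_le_l.
Qed.

Lemma fmeet_mono x y x' y' : le x x' -> le y y' -> le (meet x y) (meet x' y').
Proof.
  intros Hx Hy. apply fmeet_greatest.
  - exact (fle_trans L _ _ _ (fmeet_le_l x y) Hx).
  - exact (fle_trans L _ _ _ (fmeet_le_r x y) Hy).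
Qed.

Lemma fmeet_idem x : meet x x = x.
Proof.
  apply fle_antisym; [apply fmeet_le_l | apply fmeet_greatest; apply fle_refl].
Qed.

Lemma fbot_least x : le fbot x.
Proof. apply fsup_least. intros _ []. Qed.

Lemma fle_fbot x : le x fbot -> x = fbot.
Proof. intro H. exact (fle_antisym L _ _ H (fbot_least x)). Qed.

Lemma ftop_greatest x : le x ftop.
Proof. exact (fsup_ub L (fun _ => True) x I). Qed.

Lemma fmeet_ftop x : meet x ftop = x.
Proof.
  apply fle_antisym; [apply fmeet_le_l|].
  apply fmeet_greatest; [apply fle_refl | apply ftop_greatest].
Qed.

Lemma fmeet_nonzero_mono x y x' y' :
  le x x' -> le y y' -> meet x y <> fbot -> meet x' y' <> fbot.
Proof.
  intros Hx Hy Hxy E. apply Hxy, fle_fbot.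
  rewrite <- E. exact (fmeet_mono _ _ _ _ Hx Hy).
Qed.

Lemma fmeet_fsup_le x (S : L -> Prop) y :
  (forall s, S s -> le (meet x s) y) -> le (meet x (fsup L S)) y.
Proof.
  intro H. rewrite fmeet_distr. apply fsup_least.
  intros c [s [Hs ->]]. exact (H s Hs).
Qed.

Lemma fmeet_fsup_nonzero x (S : L -> Prop) :
  meet x (fsup L S) <> fbot -> exists s, S s /\ meet x s <> fbot.
Proof.
  intro H. apply NNPP. intro Hnone. apply H, fle_fbot, fmeet_fsup_le.
  intros s Hs. apply NNPP. intro Hxs. apply Hnone. exists s. split; [exact Hs|].
  intro E. apply Hxs. rewrite E. apply fle_refl.
Qed.

Lemma fjoin_le_l x y : le x (fjoin L x y).
Proof. apply fsup_ub. left. reflexivity. Qed.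

Lemma fjoin_le_r x y : le y (fjoin L x y).
Proof. apply fsup_ub. right. reflexivity. Qed.

Lemma fjoin_least x y z : le x z -> le y z -> le (fjoin L x y) z.
Proof. intros Hx Hy. apply fsup_least. intros w [-> | ->]; assumption. Qed.

Lemma fimp_adj x y z : le z (fimp L x y) <-> le (meet z x) y.
Proof.
  split.
  - intro Hz. eapply fle_trans; [apply fmeet_mono; [exact Hz | apply fle_refl]|].
    rewrite fmeet_comm. apply fmeet_fsup_le.
    intros s Hs. rewrite fmeet_comm. exact Hs.
  - intro Hz. exact (fsup_ub L _ z Hz).
Qed.

Lemma fimp_ftop x y : le x y -> fimp L x y = ftop.
Proof.
  intro Hxy. apply fle_antisym; [apply ftop_greatest|].
  apply fimp_adj. exact (fle_trans L _ _ _ (fmeet_le_r _ _) Hxy).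
Qed.

Lemma fimp_disjoint x y : meet y x = fbot -> fimp L x y = pcompl L x.
Proof.
  intro Hyx. apply fle_antisym; apply fimp_adj.
  - rewrite <- Hyx. apply fmeet_greatest; [apply fimp_adj, fle_refl | apply fmeet_le_r].
  - apply fle_trans with fbot; [apply fimp_adj, fle_refl | apply fbot_least].
Qed.

Lemma fle_pcompl x y : le x (pcompl L y) <-> meet x y = fbot.
Proof.
  unfold pcompl. rewrite fimp_adj.
  split; [apply fle_fbot | intros ->; apply fle_refl].
Qed.

Lemma pcompl_fmeet x : meet (pcompl L x) x = fbot.
Proof. apply fle_pcompl, fle_refl. Qed.

Lemma fle_own_pcompl x : le x (pcompl L x) -> x = fbot.
Proof. intro H. rewrite <- (fmeet_idem x). apply fle_pcompl, H. Qed.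

Lemma pcompl_antitone x y : le x y -> le (pcompl L y) (pcompl L x).
Proof.
  intro Hxy. apply fle_pcompl, fle_fbot.
  rewrite <- (pcompl_fmeet y). apply fmeet_mono; [apply fle_refl | exact Hxy].
Qed.

Definition fsup_image {I : Type} (M : I -> Prop) (s : I -> L) : L :=
  fsup L (fun y => exists i, M i /\ y = s i).

Lemma fsup_image_ub {I : Type} (M : I -> Prop) (s : I -> L) i :
  M i -> le (s i) (fsup_image M s).
Proof. intro Hi. apply fsup_ub. exists i. split; [exact Hi | reflexivity]. Qed.

Lemma fmeet_fsup_image_le {I : Type} (M : I -> Prop) (s : I -> L) x y :
  (forall i, M i -> le (meet x (s i)) y) -> le (meet x (fsup_image M s)) y.
Proof. intro H. apply fmeet_fsup_le. intros z [i [Hi ->]]. exact (H i Hi). Qed.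

Definition atom (u : L) : Prop :=
  u <> fbot /\ forall v, le v u -> v <> fbot -> v = u.

Lemma atom_dichotomy u y : atom u -> le y (pcompl L u) \/ le u y.
Proof.
  intros [_ Hu]. destruct (classic (meet y u = fbot)) as [E | E].
  - left. apply fle_pcompl, E.
  - right. rewrite <- (Hu _ (fmeet_le_r y u) E). apply fmeet_le_l.
Qed.

Lemma atom_pcompl_isolated u : atom u -> isolated_point L (pcompl L u).
Proof.
  intro Hatom. assert (Hu0 := proj1 Hatom).
  split; [split|].
  - intro E. apply Hu0, fle_own_pcompl. rewrite E. apply ftop_greatest.
  - intros x y Hxy.
    destruct (atom_dichotomy u x Hatom) as [Hx | Hux]; [left; exact Hx|].
    destruct (atom_dichotomy u y Hatom) as [Hy | Huy]; [right; exact Hy|].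
    exfalso. apply Hu0, fle_own_pcompl.
    exact (fle_trans L _ _ _ (fmeet_greatest _ _ _ Hux Huy) Hxy).
  - exists u. intro s. split.
    + intros [-> | ->].
      * exists u. symmetry. apply fimp_ftop, fle_refl.
      * exists fbot. reflexivity.
    + intros [y ->]. destruct (atom_dichotomy u y Hatom) as [Hy | Huy].
      * right. apply fimp_disjoint, fle_pcompl, Hy.
      * left. apply fimp_ftop, Huy.
Qed.

Definition disjoint_family {I : Type} (F : I -> L) (M : I -> Prop) : Prop :=
  forall i j, M i -> M j -> i <> j -> meet (F i) (F j) = fbot.

Lemma exists_maximal_disjoint_family {I : Type} (F : I -> L) (Q : I -> Prop) :
  exists M, (forall i, M i -> Q i) /\ disjoint_family F M /\
    forall j, Q j -> F j <> fbot -> exists i, M i /\ meet (F i) (F j) <> fbot.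
Proof.
  set (P := fun M : I -> Prop => (forall i, M i -> Q i) /\ disjoint_family F M).
  destruct (@classical_sets.Zorn_bigcup I P) as [M [[HQ Hdisj] Hmax]].
  - intros C HC Hchain. split.
    + intros i [N HN Hi]. exact (proj1 (HC N HN) i Hi).
    + intros i j [N HN Hi] [N' HN' Hj] Hij.
      destruct (Hchain N N' HN HN') as [Hsub | Hsub].
      * exact (proj2 (HC N' HN') i j (Hsub i Hi) Hj Hij).
      * exact (proj2 (HC N HN) i j Hi (Hsub j Hj) Hij).
  - exists M. split; [exact HQ|]. split; [exact Hdisj|].
    intros j Hj HFj. apply NNPP. intro Hnone.
    assert (Hsep : forall i, M i -> meet (F i) (F j) = fbot).
    { intros i Hi. apply NNPP. intro E. apply Hnone. exists i. split; assumption. }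
    assert (HMj : M j).
    { apply NNPP. intro HnMj. apply (Hmax (fun i => M i \/ i = j)).
      - split; [intros i Hi; left; exact Hi|].
        intro Hsub. exact (HnMj (Hsub j (or_intror eq_refl))).
      - split; [intros i [Hi | ->]; auto|].
        intros i k [Hi | ->] [Hk | ->] Hik; auto.
        + rewrite fmeet_comm. auto.
        + contradiction. }
    apply Hnone. exists j. rewrite fmeet_idem. split; assumption.
Qed.

Definition pair_join (pq : L * L) : L := fjoin L (fst pq) (snd pq).

Lemma fsup_fst_snd_disjoint (M : L * L -> Prop) :
  (forall pq, M pq -> meet (fst pq) (snd pq) = fbot) ->
  disjoint_family pair_join M ->
  meet (fsup_image M fst) (fsup_image M snd) = fbot.
Proof.
  intros Hpair Hdisj. apply fle_fbot, fmeet_fsup_image_le.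
  intros j Hj. rewrite fmeet_comm. apply fmeet_fsup_image_le.
  intros i Hi. destruct (classic (i = j)) as [<- | Hij].
  - rewrite fmeet_comm, (Hpair i Hi). apply fle_refl.
  - rewrite <- (Hdisj j i Hj Hi (not_eq_sym Hij)).
    apply fmeet_mono; [apply fjoin_le_r | apply fjoin_le_l].
Qed.

End FrameFacts.

Section MetricLocale.
Variable L : Frame.
Variable d : L -> Rbar.
Notation le := (fle L).
Notation meet := (fmeet L).

Hypothesis d_mono : forall a b, le a b -> Rbar_le (d a) (d b).
Hypothesis d_subadd : forall a b, meet a b <> fbot ->
  Rbar_le (d (fjoin L a b)) (Rbar_plus (d a) (d b)).
Hypothesis d_cover : forall eps, 0 < eps ->
  fsup L (fun a => Rbar_lt (d a) (Finite eps)) = ftop.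
Hypothesis d_adm : admissible L d.

Lemma eps_below_le r b y : 0 < r -> eps_below L d r b y -> le b y.
Proof. intros Hr Hb. rewrite (d_adm y). apply fsup_ub. exists r. split; assumption. Qed.

Lemma eps_below_antitone r b b' y : le b' b -> eps_below L d r b y -> eps_below L d r b' y.
Proof.
  intros Hb' Hb c Hc Hcb'. apply Hb; [exact Hc|].
  exact (fmeet_nonzero_mono L _ _ _ _ (fle_refl L c) Hb' Hcb').
Qed.

Lemma meets_small x r : 0 < r -> x <> fbot ->
  exists c, Rbar_lt (d c) (Finite r) /\ meet x c <> fbot.
Proof.
  intros Hr Hx. apply fmeet_fsup_nonzero.
  rewrite (d_cover r Hr), fmeet_ftop. exact Hx.
Qed.

Lemma meets_approximant x y : meet x y <> fbot ->
  exists b, (exists r, 0 < r /\ eps_below L d r b y) /\ meet x b <> fbot.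
Proof. intro Hxy. apply fmeet_fsup_nonzero. rewrite <- (d_adm y). exact Hxy. Qed.

Lemma small_piece_not_le b y r : 0 < r -> ~ le b y ->
  exists c, Rbar_lt (d c) (Finite r) /\ ~ le (meet b c) y.
Proof.
  intros Hr Hby. apply NNPP. intro Hnone. apply Hby.
  rewrite <- (fmeet_ftop L b), <- (d_cover r Hr). apply fmeet_fsup_le.
  intros c Hc. apply NNPP. intro Hbc. apply Hnone. exists c. split; assumption.
Qed.

Lemma unsplittable_atom u : u <> fbot ->
  (forall p q, le p u -> le q u -> p <> fbot -> q <> fbot -> meet p q <> fbot) ->
  atom L u.
Proof.
  intros Hu Hmeets. split; [exact Hu|]. intros v Hvu Hv.
  apply fle_antisym; [exact Hvu|].
  destruct (meets_approximant v v) as [b [[r [Hr Hb]] Hvb]]; [rewrite fmeet_idem; exact Hv|].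
  assert (Hbu : le b u) by exact (fle_trans L _ _ _ (eps_below_le r b v Hr Hb) Hvu).
  assert (Hb0 : b <> fbot).
  { intro E. apply Hvb. rewrite E. apply fle_fbot, fmeet_le_r. }
  rewrite <- (fmeet_ftop L u), <- (d_cover r Hr). apply fmeet_fsup_le.
  intros c Hc. destruct (classic (meet u c = fbot)) as [E | Huc].
  - rewrite E. apply fbot_least.
  - apply fle_trans with c; [apply fmeet_le_r|]. apply Hb; [exact Hc|].
    apply (fmeet_nonzero_mono L (meet u c) b); [apply fmeet_le_r | apply fle_refl|].
    exact (Hmeets _ _ (fmeet_le_l L u c) Hbu Huc Hb0).
Qed.

Lemma nonzero_split (Hnoiso : forall p : L, ~ isolated_point L p) u : u <> fbot ->
  exists p q, le p u /\ le q u /\ p <> fbot /\ q <> fbot /\ meet p q = fbot.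
Proof.
  intro Hu. apply NNPP. intro Hnone. apply (Hnoiso (pcompl L u)).
  apply atom_pcompl_isolated, unsplittable_atom; [exact Hu|].
  intros p q Hp Hq Hp0 Hq0 E. apply Hnone. exists p, q. repeat split; assumption.
Qed.

Definition well_inside (a W : L) : Prop :=
  exists r, 0 < r /\ Rbar_lt (d W) (Finite r) /\ eps_below L d r W a.

Lemma well_inside_le a W W' : le W' W -> well_inside a W -> well_inside a W'.
Proof.
  intros HW [r [Hr [HdW HWa]]]. exists r. split; [exact Hr|]. split.
  - exact (Rbar_le_lt_trans _ _ _ (d_mono _ _ HW) HdW).
  - exact (eps_below_antitone r W W' a HW HWa).
Qed.

Lemma well_inside_diam_lt a W c : well_inside a W -> meet W c <> fbot -> ~ le c a ->
  Rbar_lt (d W) (d c).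
Proof.
  intros [r [_ [HdW HWa]]] HWc Hca. apply (Rbar_lt_le_trans _ _ _ HdW), Rbar_not_lt_le.
  intro Hc. apply Hca, HWa; [exact Hc|]. rewrite fmeet_comm. exact HWc.
Qed.

Lemma dense_well_inside a c : pcompl L a = fbot -> c <> fbot ->
  exists u, le u c /\ u <> fbot /\ well_inside a u.
Proof.
  intros Ha Hc.
  assert (Hca : meet c a <> fbot).
  { intro E. apply Hc, fle_fbot. rewrite <- Ha. apply fle_pcompl, E. }
  destruct (meets_approximant c a Hca) as [b [[r [Hr Hb]] Hcb]].
  destruct (meets_small (meet c b) r Hr Hcb) as [e [He Hcbe]].
  exists (meet (meet c b) e). split; [|split; [exact Hcbe|]].
  - exact (fle_trans L _ _ _ (fmeet_le_l L _ _) (fmeet_le_l L _ _)).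
  - exists r. split; [exact Hr|]. split.
    + exact (Rbar_le_lt_trans _ _ _ (d_mono _ _ (fmeet_le_r L _ _)) He).
    + apply (eps_below_antitone r b); [|exact Hb].
      exact (fle_trans L _ _ _ (fmeet_le_l L _ _) (fmeet_le_r L _ _)).
Qed.

Lemma diam_fjoin_lt W c r : meet W c <> fbot ->
  Rbar_lt (d W) (Finite r) -> Rbar_lt (d c) (Finite r) ->
  Rbar_lt (d (fjoin L W c)) (Finite (r + r)).
Proof.
  intros HWc HW Hc. apply (Rbar_le_lt_trans _ _ _ (d_subadd W c HWc)).
  exact (Rbar_plus_lt_compat _ _ _ _ HW Hc).
Qed.

Lemma pcompl_fsup_pieces_le a {I : Type} (F s : I -> L) (M : I -> Prop) :
  pcompl L a = fbot ->
  (forall i, M i -> well_inside a (F i)) ->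
  (forall i, M i -> le (s i) (F i) /\ s i <> fbot) ->
  (forall u, u <> fbot -> well_inside a u -> exists i, M i /\ meet (F i) u <> fbot) ->
  le (pcompl L (fsup_image L M s)) a.
Proof.
  intros Ha HF Hs Hcover. set (x := pcompl L (fsup_image L M s)).
  rewrite (d_adm x). apply fsup_least. intros b [eps [Heps Hb]].
  apply NNPP. intro Hba.
  destruct (small_piece_not_le b a (eps / 2)) as [c [Hc Hbc]]; [lra | exact Hba|].
  assert (Hcb : meet c b <> fbot).
  { intro E. apply Hbc. rewrite fmeet_comm, E. apply fbot_least. }
  assert (Hca : ~ le c a).
  { intro H. apply Hbc. exact (fle_trans L _ _ _ (fmeet_le_r L b c) H). }
  assert (Hc0 : c <> fbot).
  { intro E. apply Hcb. rewrite E. apply fle_fbot, fmeet_le_l. }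
  destruct (dense_well_inside a c Ha Hc0) as [u [Huc [Hu0 Hu]]].
  destruct (Hcover u Hu0 Hu) as [i [Hi HFu]].
  assert (HFc : meet (F i) c <> fbot)
    by exact (fmeet_nonzero_mono L _ _ _ _ (fle_refl L _) Huc HFu).
  assert (HdF : Rbar_lt (d (F i)) (Finite (eps / 2)))
    by exact (Rbar_lt_trans _ _ _ (well_inside_diam_lt a _ c (HF i Hi) HFc Hca) Hc).
  assert (HFx : le (fjoin L (F i) c) x).
  { apply Hb.
    - replace eps with (eps / 2 + eps / 2) by field. exact (diam_fjoin_lt _ _ _ HFc HdF Hc).
    - exact (fmeet_nonzero_mono L _ _ _ _ (fjoin_le_r L _ _) (fle_refl L _) Hcb). }
  destruct (Hs i Hi) as [HsF Hs0]. apply Hs0, fle_fbot.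
  rewrite <- (pcompl_fmeet L (fsup_image L M s)). apply fmeet_greatest.
  - exact (fle_trans L _ _ _ HsF (fle_trans L _ _ _ (fjoin_le_l L _ _) HFx)).
  - exact (fsup_image_ub L M s i Hi).
Qed.

Definition splitting (a : L) (pq : L * L) : Prop :=
  fst pq <> fbot /\ snd pq <> fbot /\ meet (fst pq) (snd pq) = fbot /\
  well_inside a (pair_join L pq).

Lemma exists_maximal_splitting_family (Hnoiso : forall p : L, ~ isolated_point L p) a :
  exists M, (forall pq, M pq -> splitting a pq) /\
    disjoint_family L (pair_join L) M /\
    forall u, u <> fbot -> well_inside a u -> exists pq, M pq /\ meet (pair_join L pq) u <> fbot.
Proof.
  destruct (exists_maximal_disjoint_family L (pair_join L) (splitting a))
    as [M [Hsplit [Hdisj Hmax]]].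
  exists M. split; [exact Hsplit|]. split; [exact Hdisj|].
  intros u Hu0 Hu. destruct (nonzero_split Hnoiso u Hu0) as [p [q [Hp [Hq [Hp0 [Hq0 Hpq]]]]]].
  assert (Hpqu : le (fjoin L p q) u) by exact (fjoin_least L _ _ _ Hp Hq).
  destruct (Hmax (p, q)) as [pq [HM Hmeet]].
  - repeat split; simpl; try assumption. exact (well_inside_le a u _ Hpqu Hu).
  - intro E. apply Hp0, fle_fbot. rewrite <- E. apply fjoin_le_l.
  - exists pq. split; [exact HM|].
    exact (fmeet_nonzero_mono L _ _ _ _ (fle_refl L _) Hpqu Hmeet).
Qed.

End MetricLocale.

Theorem corollary5p5 (L : Frame) (d : L -> Rbar)
  (Hmetric : metric_locale L d)
  (Hnoiso : forall p : L, ~ isolated_point L p)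
  (a : L) (Ha : pcompl L a = fbot) :
  exists g : L, fle L (fjoin L (pcompl L g) (pcompl L (pcompl L g))) a.
Proof.
  destruct Hmetric as [[_ [_ [Hmono [Hsubadd Hcover]]]] Hadm].
  destruct (exists_maximal_splitting_family L d Hmono Hcover Hadm Hnoiso a)
    as [M [Hsplit [Hdisj Hmeets_family]]].
  set (g := fsup_image L M fst). set (h := fsup_image L M snd).
  assert (Hpieces : forall s : L * L -> L,
      (forall pq, M pq -> fle L (s pq) (pair_join L pq) /\ s pq <> fbot) ->
      fle L (pcompl L (fsup_image L M s)) a).
  { intros s Hs.
    apply (pcompl_fsup_pieces_le L d Hmono Hsubadd Hcover Hadm a (pair_join L) s M Ha);
      [intros pq Hpq; apply (Hsplit pq Hpq) | exact Hs | exact Hmeets_family]. }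
  assert (Hhg : fle L h (pcompl L g)).
  { apply fle_pcompl. rewrite fmeet_comm.
    apply fsup_fst_snd_disjoint; [intros pq Hpq; apply (Hsplit pq Hpq) | exact Hdisj]. }
  exists g. apply fjoin_least.
  - apply Hpieces. intros pq Hpq. split; [apply fjoin_le_l | apply (Hsplit pq Hpq)].
  - apply (fle_trans L _ (pcompl L h)); [exact (pcompl_antitone L _ _ Hhg)|].
    apply Hpieces. intros pq Hpq. split; [apply fjoin_le_r | apply (Hsplit pq Hpq)].
Qed.
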